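(* The combinatorial tiling $K$ has finite local complexity: for every $r>0$ there are only finitely many patches of $K$ of edge-diameter less than $r$, up to cell-preserving isomorphisms between subcomplexes of $K$.
   Context: A combinatorial tiling is a 2-dimensional CW-complex whose underlying space is homeomorphic to the open unit disk; faces are closed 2-cells, edges closed 1-cells, vertices 0-cells. The subdivision rule $\omega$ acts on a pentagon (closed disk with five boundary vertices $v_1,\dots,v_5$ in cyclic order, indices mod 5): add a vertex $m_i$ in the interior of each edge $v_iv_{i+1}$, five interior vertices $c_1,\dots,c_5$, edges $c_ic_{i+1}$ and $c_im_i$; the face is replaced by the central pentagon $c_1\cdots c_5$ and the five petals $v_i\,m_i\,c_i\,c_{i-1}\,m_{i-1}$. Applying $\omega$ to every face gives the subdivision of a complex. $K_0$ is one pentagon, $K_n=\omega^n(K_0)$, $\iota_n:K_n\to K_{n+1}$ is the embedding of $K_n$ onto the central superpentagon $\omega^n(\text{central face of }\omega(K_0))$ of $K_{n+1}$ (central pentagon to central pentagon), and $K$ is the direct limit of $(K_n,\iota_n)$ (undecorated). A patch is a 2-dimensional subcomplex with finitely many cells that is a union of faces connected through chains of faces sharing edges. Edge-diameter is measured with the edge-path distance between vertices. *)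

(* A finite complex is represented by
   (number of vertex labels used, list of faces), each face being the cyclic
   list of its 5 boundary vertices (labels are natural numbers); edges are
   the pairs of cyclically consecutive vertices of faces. *)
From mathcomp Require Import all_boot.

Set Implicit Arguments.
Unset Strict Implicit.
Unset Printing Implicit Defensive.

Definition cplx := (nat * seq (seq nat))%type.

Definition uedge (a b : nat) : nat * nat := (minn a b, maxn a b).

Definition face_edges (F : seq nat) : seq (nat * nat) :=
  [seq uedge (nth 0 F i) (nth 0 F (i.+1 %% size F)) | i <- iota 0 (size F)].

Definition cedges (K : cplx) : seq (nat * nat) :=
  undup (flatten (map face_edges K.2)).

(* label of the new midpoint vertex of the edge ab in omega K *)
Definition mid (K : cplx) (a b : nat) : nat := K.1 + index (uedge a b) (cedges K).

(* label of the i-th interior vertex c_i created in the j-th face of K *)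
Definition ctr (K : cplx) (j i : nat) : nat := K.1 + size (cedges K) + 5 * j + i.

(* the six faces replacing face number j, F = [v_0;...;v_4]:
   central pentagon c_0...c_4 and petals v_i m_i c_i c_{i-1} m_{i-1} *)
Definition sub_face (K : cplx) (j : nat) (F : seq nat) : seq (seq nat) :=
  let c i := ctr K j (i %% 5) in
  let v i := nth 0 F (i %% 5) in
  [seq c i | i <- iota 0 5] ::
  [seq [:: v i; mid K (v i) (v i.+1); c i; c (i + 4); mid K (v (i + 4)) (v i)]
  | i <- iota 0 5].

Definition omega (K : cplx) : cplx :=
  (K.1 + size (cedges K) + 5 * size K.2,
   flatten [seq sub_face K j (nth [::] K.2 j) | j <- iota 0 (size K.2)]).

Definition K0 : cplx := (5, [:: [:: 0; 1; 2; 3; 4]]).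

Definition Kn (n : nat) : cplx := iter n omega K0.

(* Given a face-preserving vertex map f : A -> B (mapping each face list of A
   to a face list of B), the induced map omega(A) -> omega(B). *)
Definition omega_map (A B : cplx) (f : nat -> nat) (v : nat) : nat :=
  let nA := A.1 in
  let eA := cedges A in
  if v < nA then f v
  else if v < nA + size eA then
    let e := nth (0, 0) eA (v - nA) in mid B (f e.1) (f e.2)
  else
    let w := v - nA - size eA in
    ctr B (index (map f (nth [::] A.2 (w %/ 5))) B.2) (w %% 5).

(* iota_n : K_n -> K_{n+1}, embedding onto the central superpentagon:
   iota_0 sends the pentagon 0..4 onto the central pentagon 10..14 of K_1,
   and iota_{n+1} = omega(iota_n). *)
Fixpoint emb (n : nat) : nat -> nat :=
  match n with
  | 0 => fun v => 10 + v
  | n'.+1 => omega_map (Kn n') (Kn n) (emb n')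
  end.

Fixpoint lift (n k : nat) (v : nat) : nat :=
  match k with
  | 0 => v
  | k'.+1 => emb (n + k') (lift n k' v)
  end.

Definition adj (K : cplx) : rel nat := fun a b => uedge a b \in cedges K.

(* the edge-path distance in the direct limit K between (the images of) the
   vertices u, v of K_n is < r: some edge path of length < r joins them,
   which lives in some finite stage K_{n+k}. *)
Definition Kdist_lt (n u v r : nat) : Prop :=
  exists k (s : seq nat),
    path (adj (Kn (n + k))) (lift n k u) s /\
    last (lift n k u) s = lift n k v /\ size s < r.

Definition faces_adj : rel (seq nat) :=
  fun F G => has (fun e => e \in face_edges G) (face_edges F).

(* P is (the list of faces of) a patch of K_n, hence (via the canonical
   inclusion K_n -> K) a patch of K; every patch of K arises this way. *)
Definition is_patch (n : nat) (P : seq (seq nat)) : Prop :=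
  P != [::] /\ {subset P <= (Kn n).2} /\
  forall F G, F \in P -> G \in P ->
    exists s, path faces_adj F s /\ last F s = G /\ all (fun H => H \in P) s.

Definition Kdiam_lt (n : nat) (P : seq (seq nat)) (r : nat) : Prop :=
  forall u v, u \in flatten P -> v \in flatten P -> Kdist_lt n u v r.

Definition dih_eq (F G : seq nat) : bool :=
  has (fun k => (rot k F == G) || (rot k (rev F) == G)) (iota 0 (size F)).

Definition patch_iso (P Q : seq (seq nat)) : Prop :=
  exists phi : nat -> nat,
    {in flatten P &, injective phi} /\
    (forall F, F \in P -> exists2 G, G \in Q & dih_eq (map phi F) G) /\
    (forall G, G \in Q -> exists2 F, F \in P & dih_eq (map phi F) G).

(* Every K_n is made of pentagons in which each vertex lies on at most four
   faces and each edge on at most two, and these bounds survive the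
   subdivision.  So every vertex of K has at most 20 neighbours and a ball of
   radius r has at most 21^r vertices.  The maps iota_n are injective face maps,
   so a patch of edge-diameter < r, lifted to a common stage K_N, lies in such a
   ball and has at most 21^r vertices.  Numbering its vertices gives a canonical
   form taken from a finite list; patches with the same canonical form are
   isomorphic, and one patch per realised canonical form is the required list. *)

From Pilot Require Import Defs.
From mathcomp Require Import all_boot zify.
From Stdlib Require Import Classical.

Set Implicit Arguments.
Unset Strict Implicit.
Unset Printing Implicit Defensive.

Lemma uedgeC a b : uedge a b = uedge b a.
Proof. by rewrite /uedge minnC maxnC. Qed.

Lemma uedge_inj a b c d :
  uedge a b = uedge c d -> (a = c /\ b = d) \/ (a = d /\ b = c).
Proof. by rewrite /uedge; case=> h1 h2; lia. Qed.

Lemma uedge_map (g : nat -> nat) a b :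
  uedge (g (uedge a b).1) (g (uedge a b).2) = uedge (g a) (g b).
Proof. by rewrite {1 2}/uedge /=; case: (leqP a b) => // _; rewrite uedgeC. Qed.

Lemma size_face_edges F : size (face_edges F) = size F.
Proof. by rewrite /face_edges size_map size_iota. Qed.

Lemma nth_face_edges F i : i < size F ->
  nth (0, 0) (face_edges F) i = uedge (nth 0 F i) (nth 0 F (i.+1 %% size F)).
Proof. by move=> hi; rewrite /face_edges (nth_map 0) ?size_iota // nth_iota. Qed.

Lemma face_edges_map (g : nat -> nat) F :
  face_edges (map g F) = map (fun e => uedge (g e.1) (g e.2)) (face_edges F).
Proof.
rewrite /face_edges size_map -map_comp; apply/eq_in_map => i.
rewrite mem_iota add0n => /andP[_ hi] /=.
by rewrite (nth_map 0) // (nth_map 0) ?ltn_pmod ?uedge_map //; lia.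
Qed.

Lemma face_edgesP F e : e \in face_edges F ->
  exists a b, [/\ a \in F, b \in F & e = uedge a b].
Proof.
case/mapP => i; rewrite mem_iota add0n => /andP[_ hi] ->.
exists (nth 0 F i), (nth 0 F (i.+1 %% size F)).
by split => //; apply: mem_nth; rewrite ?ltn_pmod //; lia.
Qed.

Lemma face_edges_uniq F : uniq F -> 2 < size F -> uniq (face_edges F).
Proof.
move=> hu hs; rewrite /face_edges map_inj_in_uniq ?iota_uniq // => i j.
rewrite !mem_iota !add0n => /andP[_ hi] /andP[_ hj].
have hS k : k < size F -> k.+1 %% size F = if k.+1 == size F then 0 else k.+1.
  by move=> hk; case: eqP => [->|?]; rewrite ?modnn // modn_small; lia.
have nthK k l : k < size F -> l < size F -> nth 0 F k = nth 0 F l -> k = l.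
  by move=> hk hl /eqP; rewrite nth_uniq // => /eqP.
have hSi' : i.+1 %% size F < size F by rewrite ltn_pmod //; lia.
have hSj' : j.+1 %% size F < size F by rewrite ltn_pmod //; lia.
case/uedge_inj => [[e _]|[e1 e2]]; first exact: nthK.
move: (nthK _ _ hi hSj' e1) (nthK _ _ hSi' hj e2); rewrite (hS i hi) (hS j hj).
by do 2 case: eqP => ?; lia.
Qed.

Lemma mem_cedges K F e : F \in K.2 -> e \in face_edges F -> e \in cedges K.
Proof.
move=> hF he; rewrite /cedges mem_undup; apply/flattenP.
by exists (face_edges F) => //; apply: map_f.
Qed.

Lemma cedgesP K e : e \in cedges K -> exists2 F, F \in K.2 & e \in face_edges F.
Proof. by rewrite /cedges mem_undup => /flattenP [s /mapP [F hF ->] he]; exists F. Qed.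

Definition pentagon N (F : seq nat) :=
  (size F == 5) && uniq F && all (fun x => x < N) F.

Lemma pentagonP N F : pentagon N F ->
  [/\ size F = 5, uniq F & forall x, x \in F -> x < N].
Proof. by case/andP => /andP[/eqP hs hu] /allP. Qed.

Record wf_cplx (A : cplx) : Prop := {
  wf_pentagon : forall F, F \in A.2 -> pentagon A.1 F;
  wf_faces_uniq : uniq A.2;
  wf_vertex_deg : forall y, count (fun F => y \in F) A.2 <= 4;
  wf_edge_deg : forall e, count (fun F => e \in face_edges F) A.2 <= 2 }.

Lemma wf_nth_face A j : wf_cplx A -> j < size A.2 ->
  nth [::] A.2 j \in A.2 /\ pentagon A.1 (nth [::] A.2 j).
Proof. by move=> hA hj; have h := mem_nth [::] hj; split; last apply: wf_pentagon. Qed.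

Lemma cedges_lt A e : wf_cplx A -> e \in cedges A ->
  [/\ e = uedge e.1 e.2, e.1 < A.1 & e.2 < A.1].
Proof.
move=> hA /cedgesP [F hF /face_edgesP [a [b [ha hb ->]]]].
have [_ _ hlt] := pentagonP (wf_pentagon hA hF).
have la := hlt a ha; have lb := hlt b hb.
by rewrite (uedge_map id); split => //; rewrite /uedge /=; lia.
Qed.

(* [size (cedges _)] occurs at two convertible but syntactically different
   element types (through [mid] and [ctr]); [lia] must see a single atom. *)
Ltac cedges_lia := repeat match goal with
 | H : context[@size (Equality.sort ?T) (cedges ?A)] |- _ =>
     change (@size (Equality.sort T) (cedges A)) with (@size (nat * nat) (cedges A)) in H
 | |- context[@size (Equality.sort ?T) (cedges ?A)] =>
     change (@size (Equality.sort T) (cedges A)) with (@size (nat * nat) (cedges A)) end; lia.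

Lemma mid_range A a b : uedge a b \in cedges A ->
  A.1 <= mid A a b < A.1 + size (cedges A).
Proof. by rewrite /mid -index_mem => h; cedges_lia. Qed.

Lemma mid_inj A a b c d : uedge a b \in cedges A -> uedge c d \in cedges A ->
  mid A a b = mid A c d -> uedge a b = uedge c d.
Proof.
rewrite /mid => h1 h2 /addnI e.
by rewrite -(nth_index (0, 0) h1) -(nth_index (0, 0) h2) e.
Qed.

Lemma mid_sym A a b : mid A a b = mid A b a.
Proof. by rewrite /mid uedgeC. Qed.

(* Labels 0-4 stand for the corners v_i, 5-9 for the midpoints m_i and 10-14
   for the centres c_i. *)
Definition sub_tmpl : seq (seq nat) :=
  [:: [:: 10; 11; 12; 13; 14]; [:: 0; 5; 10; 14; 9]; [:: 1; 6; 11; 10; 5];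
      [:: 2; 7; 12; 11; 6]; [:: 3; 8; 13; 12; 7]; [:: 4; 9; 14; 13; 8]].

Definition sub_label (A : cplx) j (F : seq nat) (t : nat) : nat :=
  if t < 5 then nth 0 F t
  else if t < 10 then mid A (nth 0 F (t - 5)) (nth 0 F ((t - 4) %% 5))
  else ctr A j (t - 10).

Lemma sub_faceE A j F : sub_face A j F = map (map (sub_label A j F)) sub_tmpl.
Proof. by []. Qed.

Lemma sub_tmpl_pentagon T : T \in sub_tmpl -> pentagon 15 T.
Proof. by move: T; apply/allP. Qed.

Lemma sub_tmpl_lt T t : T \in sub_tmpl -> t \in T -> t < 15.
Proof. by case/sub_tmpl_pentagon/pentagonP => _ _; apply. Qed.

Lemma sub_tmpl_has_ctr T : T \in sub_tmpl -> exists2 t, t \in T & 10 <= t.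
Proof.
have has_ctr : all (has (fun t => 10 <= t)) sub_tmpl by [].
by move/(allP has_ctr)/hasP.
Qed.

Lemma count_sub_tmpl_vertex t : t < 15 ->
  count (fun T => t \in T) sub_tmpl = if t < 5 then 1 else if t < 10 then 2 else 3.
Proof. by do 15 case: t => [|t] //. Qed.

Lemma sub_tmpl_edge T a b : T \in sub_tmpl -> (a, b) \in face_edges T ->
  let c := count (fun T => (a, b) \in face_edges T) sub_tmpl in
  [/\ (a, b) = uedge a b, a <= b < 15 &
      (a < 5) && (5 <= b < 10) && (c <= 1) || (10 <= b) && (c <= 2)].
Proof.
pose ok p := let c := count (fun T => p \in face_edges T) sub_tmpl in
  [&& p == uedge p.1 p.2, p.1 <= p.2 < 15 &
      (p.1 < 5) && (5 <= p.2 < 10) && (c <= 1) || (10 <= p.2) && (c <= 2)].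
have edges_ok : all (fun T => all ok (face_edges T)) sub_tmpl by [].
by move=> hT hp; case/and3P: (allP (allP edges_ok T hT) _ hp) => /eqP.
Qed.

Section SubLabel.

Variables (A : cplx) (j : nat) (F : seq nat).
Hypotheses (hF : pentagon A.1 F) (hFA : F \in A.2).

Local Notation g := (sub_label A j F).
Local Notation E := (size (cedges A)).

Lemma sub_label_ctr t : 10 <= t -> g t = A.1 + E + 5 * j + (t - 10).
Proof. by move=> ht; rewrite /sub_label !ifF //; lia. Qed.

Lemma sub_label_corner t : t < 5 -> [/\ g t = nth 0 F t, g t < A.1 & g t \in F].
Proof.
have [hs _ hlt] := pentagonP hF.
move=> ht; have hm : nth 0 F t \in F by rewrite mem_nth ?hs.
by rewrite /sub_label ht; split => //; apply: hlt.
Qed.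

Lemma sub_label_mid t : 5 <= t < 10 ->
  let e := nth (0, 0) (face_edges F) (t - 5) in
  [/\ A.1 <= g t < A.1 + E, nth (0, 0) (cedges A) (g t - A.1) = e & e \in face_edges F].
Proof.
have [hs _ _] := pentagonP hF.
move=> ht e; have he : e \in face_edges F by rewrite mem_nth // size_face_edges hs; lia.
have hc := mem_cedges hFA he; have hi : index e (cedges A) < E by rewrite index_mem.
have -> : g t = A.1 + index e (cedges A).
  rewrite /sub_label ifF; last lia.
  rewrite ifT; last lia.
  by rewrite /e nth_face_edges hs; last lia; have -> : t - 4 = (t - 5).+1 by lia.
by split; [cedges_lia | rewrite addKn nth_index |].
Qed.

Lemma sub_label_cases t : t < 15 ->
  [\/ [/\ t < 5, g t < A.1 & g t \in F],
      [/\ 5 <= t < 10, A.1 <= g t < A.1 + E &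
          nth (0, 0) (cedges A) (g t - A.1) \in face_edges F]
    | 10 <= t /\ g t = A.1 + E + 5 * j + (t - 10)].
Proof.
move=> ht; case: (ltnP t 5) => h5.
  by have [_ ? ?] := sub_label_corner h5; apply: Or31.
case: (ltnP t 10) => h10; last by apply: Or33; rewrite sub_label_ctr.
have ht' : 5 <= t < 10 by lia.
by have [? -> ?] := sub_label_mid ht'; apply: Or32.
Qed.

Lemma sub_label_inj t t' : t < 15 -> t' < 15 -> g t = g t' -> t = t'.
Proof.
have [hs hu _] := pentagonP hF.
have hEu : uniq (face_edges F) by rewrite face_edges_uniq ?hs.
move=> ht ht' e.
case: (ltnP t 5) => h5; case: (ltnP t' 5) => h5'.
- have [e1 _ _] := sub_label_corner h5; have [e2 _ _] := sub_label_corner h5'.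
  by move: e; rewrite e1 e2 => /eqP; rewrite nth_uniq ?hs // => /eqP.
- have [_ hr _] := sub_label_corner h5; move: e.
  by case: (sub_label_cases ht') => [[]|[]|[]]; cedges_lia.
- have [_ hr _] := sub_label_corner h5'; move: e.
  by case: (sub_label_cases ht) => [[]|[]|[]]; cedges_lia.
case: (ltnP t 10) => h10; case: (ltnP t' 10) => h10'.
- have [_ n1 _] := sub_label_mid (ltac:(lia) : 5 <= t < 10).
  have [_ n2 _] := sub_label_mid (ltac:(lia) : 5 <= t' < 10).
  move: n1 n2; rewrite e => -> /eqP; rewrite nth_uniq ?size_face_edges ?hs //; lia.
- have [hr _ _] := sub_label_mid (ltac:(lia) : 5 <= t < 10).
  by move: e; rewrite [g t']sub_label_ctr //; cedges_lia.
- have [hr _ _] := sub_label_mid (ltac:(lia) : 5 <= t' < 10).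
  by move: e; rewrite [g t]sub_label_ctr //; cedges_lia.
- by move: e; rewrite !sub_label_ctr //; lia.
Qed.

Lemma sub_face_uniq : uniq (sub_face A j F).
Proof.
rewrite sub_faceE map_inj_in_uniq // => T T' /sub_tmpl_pentagon hT /sub_tmpl_pentagon hT'.
apply: (inj_in_map (A := fun t => t < 15)); first by move=> x y; apply: sub_label_inj.
  by case/andP: hT.
by case/andP: hT'.
Qed.

Lemma count_sub_face_label t : t < 15 ->
  count (fun G => g t \in G) (sub_face A j F) = count (fun T => t \in T) sub_tmpl.
Proof.
move=> ht; rewrite sub_faceE count_map; apply: eq_in_count => T hT /=.
apply/mapP/idP => [[t' ht' e]|]; last by exists t.
by rewrite (sub_label_inj ht (sub_tmpl_lt hT ht') e).
Qed.

Lemma count_sub_face_edge_label T p : T \in sub_tmpl -> p \in face_edges T ->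
  count (fun G => uedge (g p.1) (g p.2) \in face_edges G) (sub_face A j F) =
  count (fun T => p \in face_edges T) sub_tmpl.
Proof.
case: p => a b hT hp; rewrite sub_faceE count_map; apply: eq_in_count => T' hT' /=.
rewrite face_edges_map; apply/mapP/idP => [[[c d] hq e]|]; last by exists (a, b).
suff -> : (a, b) = (c, d) by [].
have [-> /andP[hab hb] _] := sub_tmpl_edge hT hp.
have [-> /andP[hcd hd] _] := sub_tmpl_edge hT' hq.
have ha : a < 15 by lia.
have hc : c < 15 by lia.
case/uedge_inj: e => [[e1 e2]|[e1 e2]].
- by rewrite (sub_label_inj ha hc e1) (sub_label_inj hb hd e2).
- by rewrite (sub_label_inj ha hd e1) (sub_label_inj hb hc e2) uedgeC.
Qed.

Lemma count_sub_face_eq0 (P : pred (seq nat)) :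
  (forall T, T \in sub_tmpl -> ~~ P (map g T)) -> count P (sub_face A j F) = 0.
Proof.
move=> hP; rewrite sub_faceE count_map; apply/eqP; rewrite -leqn0 leqNgt -has_count.
by apply/hasP => -[T hT /= hPT]; move: (hP T hT); rewrite hPT.
Qed.

(* An old vertex lies on one petal of each face through it, a midpoint on two
   petals of each face through its edge, a centre on three faces of its own
   subdivided face. *)
Lemma count_sub_face_vertex y :
  count (fun G => y \in G) (sub_face A j F) <=
  if y < A.1 then (y \in F : nat)
  else if y < A.1 + E then 2 * (nth (0, 0) (cedges A) (y - A.1) \in face_edges F)
  else 3 * (j == (y - A.1 - E) %/ 5).
Proof.
case: (boolP (has (fun t => g t == y) (iota 0 15))) => [/hasP [t]|hy]; last first.
  rewrite count_sub_face_eq0 // => T hT; apply/mapP => -[t ht ey].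
  apply: (negP hy); apply/hasP; exists t; last by rewrite ey.
  by rewrite mem_iota (sub_tmpl_lt hT ht).
rewrite mem_iota => /andP[_ ht] /eqP <-.
rewrite count_sub_face_label // count_sub_tmpl_vertex //.
case: (sub_label_cases ht) => [[h5 hr hm]|[h hr hm]|[h10 hg]].
- by rewrite h5 hr hm.
- have -> : (t < 5) = false by lia.
  have -> : (t < 10) = true by lia.
  have -> : (g t < A.1) = false by lia.
  have -> : (g t < A.1 + E) = true by cedges_lia.
  by rewrite hm.
- have -> : (t < 5) = false by lia.
  have -> : (t < 10) = false by lia.
  have -> : (g t < A.1) = false by lia.
  have -> : (g t < A.1 + E) = false by lia.
  have -> : (g t - A.1 - E) %/ 5 = j by lia.
  by rewrite eqxx.
Qed.

(* An edge of [omega A] either halves an edge of [A], lying on one petal of each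
   face through it, or lies inside a single subdivided face. *)
Lemma count_sub_face_edge e :
  count (fun G => e \in face_edges G) (sub_face A j F) <=
  if A.1 + E <= e.2 then 2 * (j == (e.2 - A.1 - E) %/ 5)
  else (nth (0, 0) (cedges A) (e.2 - A.1) \in face_edges F : nat).
Proof.
pose ug p := uedge (g p.1) (g p.2).
case: (boolP (has (fun T => has (fun p => ug p == e) (face_edges T)) sub_tmpl));
  last first.
  move=> he; rewrite count_sub_face_eq0 // => T hT.
  rewrite face_edges_map; apply/mapP => -[p hp ep].
  by apply: (negP he); apply/hasP; exists T => //; apply/hasP; exists p; rewrite // ep.
case/hasP => T hT /hasP [[a b] hp /eqP <-].
rewrite (count_sub_face_edge_label hT hp).
have [_ /andP[hab hb]] := sub_tmpl_edge hT hp.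
case/orP => [/andP[/andP[ha hbm] hc]|/andP[hb10 hc]].
- have [_ hga _] := sub_label_corner ha.
  have [hgb hn he] := sub_label_mid hbm.
  have -> : (ug (a, b)).2 = g b by rewrite /ug /uedge /=; lia.
  by rewrite ifF ?hn ?he //; cedges_lia.
- have hgb := sub_label_ctr hb10.
  have hga : g a < A.1 + E \/ g a = A.1 + E + 5 * j + (a - 10) /\ 10 <= a.
    have ha : a < 15 by lia.
    by case: (sub_label_cases ha) => [[]|[]|[]]; cedges_lia.
  have -> : A.1 + E <= (ug (a, b)).2 = true by rewrite /ug /uedge /=; lia.
  have -> : ((ug (a, b)).2 - A.1 - E) %/ 5 = j by rewrite /ug /uedge /=; lia.
  by rewrite eqxx.
Qed.

End SubLabel.

Lemma leq_sumn_map (T : eqType) (s : seq T) (f h : T -> nat) :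
  (forall x, x \in s -> f x <= h x) -> sumn (map f s) <= sumn (map h s).
Proof.
elim: s => [|x s IH] //= hfh; apply: leq_add; first by apply: hfh; rewrite mem_head.
by apply: IH => y hy; apply: hfh; rewrite inE hy orbT.
Qed.

Lemma sumn_map_nth (s : seq (seq nat)) (h : seq nat -> nat) :
  sumn [seq h (nth [::] s j) | j <- iota 0 (size s)] = sumn (map h s).
Proof. by rewrite -[in RHS](mkseq_nth [::] s) /mkseq -map_comp. Qed.

Lemma sumn_scale_count (T : Type) c (P : pred T) s :
  sumn (map (fun x => c * P x) s) = c * count P s.
Proof. by elim: s => [|x s IH] /=; rewrite ?muln0 // IH mulnDr. Qed.

Lemma sumn_scale_eq n c j0 : sumn [seq c * (j == j0) | j <- iota 0 n] <= c.
Proof.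
rewrite (sumn_scale_count c (pred1 j0)) count_uniq_mem ?iota_uniq //.
by case: (_ \in _); rewrite ?muln1 ?muln0.
Qed.

Lemma uniq_flatten_map (I T : eqType) (f : I -> seq T) l : uniq l ->
  {in l, forall i, uniq (f i)} ->
  (forall i j x, i \in l -> j \in l -> x \in f i -> x \in f j -> i = j) ->
  uniq (flatten (map f l)).
Proof.
elim: l => [|i l IH] //= /andP[hil hl] hu hd.
rewrite cat_uniq hu ?mem_head // IH //; last first.
- by move=> j j' x hj hj'; apply: hd; rewrite inE ?hj ?hj' orbT.
- by move=> j hj; apply: hu; rewrite inE hj orbT.
rewrite andbT; apply/hasP => -[x /flattenP [_ /mapP [j hj ->]] hx] hxi.
have e : i = j by apply: (hd i j x); rewrite ?mem_head ?inE ?hj ?orbT.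
by move: hil; rewrite e hj.
Qed.

Lemma omega_facesP A G : G \in (omega A).2 ->
  exists2 j, j < size A.2 &
    exists2 T, T \in sub_tmpl & G = map (sub_label A j (nth [::] A.2 j)) T.
Proof.
case/flattenP => s /mapP [j hj ->]; rewrite sub_faceE => /mapP [T hT ->].
by exists j; [move: hj; rewrite mem_iota | exists T].
Qed.

Lemma count_omega A (P : pred (seq nat)) : count P (omega A).2 =
  sumn [seq count P (sub_face A j (nth [::] A.2 j)) | j <- iota 0 (size A.2)].
Proof. by rewrite /omega /= count_flatten -map_comp. Qed.

Section OmegaWellFormed.

Variable A : cplx.
Hypothesis hA : wf_cplx A.

Local Notation E := (size (cedges A)).

Lemma nth_face_iota j : j \in iota 0 (size A.2) ->
  nth [::] A.2 j \in A.2 /\ pentagon A.1 (nth [::] A.2 j).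
Proof. by rewrite mem_iota => /andP[_ /(wf_nth_face hA)]. Qed.

Lemma omega_pentagon G : G \in (omega A).2 -> pentagon (omega A).1 G.
Proof.
case/omega_facesP => j hj [T hT ->]; have [hm hok] := wf_nth_face hA hj.
have [hs hu _] := pentagonP (sub_tmpl_pentagon hT).
rewrite /pentagon size_map hs eqxx map_inj_in_uniq ?hu /=; last first.
  by move=> x y hx hy; apply: (sub_label_inj hok hm); apply: sub_tmpl_lt hT _.
apply/allP => _ /mapP [t /(sub_tmpl_lt hT) ht ->]; rewrite /omega /=.
by case: (sub_label_cases j hok hm ht) => [[]|[]|[]]; cedges_lia.
Qed.

(* Faces coming from different faces of [A] differ in their centre labels. *)
Lemma omega_faces_uniq : uniq (omega A).2.
Proof.
rewrite /omega /=; apply: uniq_flatten_map; first exact: iota_uniq.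
  by move=> j /nth_face_iota [hm hok]; apply: sub_face_uniq.
move=> i j G /nth_face_iota [hmi hoki] /nth_face_iota [hmj hokj].
rewrite !sub_faceE => /mapP [T hT ->] /mapP [T' hT' e].
have [t ht ht10] := sub_tmpl_has_ctr hT.
have : sub_label A i (nth [::] A.2 i) t \in map (sub_label A j (nth [::] A.2 j)) T'.
  by rewrite -e map_f.
case/mapP => t' /(sub_tmpl_lt hT') ht' et; have ht15 := sub_tmpl_lt hT ht.
by case: (sub_label_cases j hokj hmj ht') => [[]|[]|[]]; rewrite -et sub_label_ctr //;
  cedges_lia.
Qed.

Lemma omega_vertex_deg y : count (fun G => y \in G) (omega A).2 <= 4.
Proof.
rewrite count_omega; case: (ltnP y A.1) => h1.
  apply: leq_trans (leq_sumn_map (h := fun j => y \in nth [::] A.2 j : nat) _) _.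
    move=> j /nth_face_iota [hm hok].
    by have := count_sub_face_vertex j hok hm y; rewrite h1.
  rewrite (sumn_map_nth A.2 (fun F => y \in F : nat)) sumn_count; exact: wf_vertex_deg.
case: (ltnP y (A.1 + E)) => h2.
  pose e := nth (0, 0) (cedges A) (y - A.1).
  apply: leq_trans (leq_sumn_map
    (h := fun j => 2 * (e \in face_edges (nth [::] A.2 j))) _) _.
    move=> j /nth_face_iota [hm hok].
    by have := count_sub_face_vertex j hok hm y; rewrite ltnNge h1 /= h2.
  rewrite (sumn_map_nth A.2 (fun F => 2 * (e \in face_edges F))) sumn_scale_count.
  exact: (leq_mul (leqnn 2) (wf_edge_deg hA _)).
apply: leq_trans (leq_sumn_map
  (h := fun j => 3 * (j == (y - A.1 - E) %/ 5)) _) (leq_trans (sumn_scale_eq _ _ _) _).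
  move=> j /nth_face_iota [hm hok].
  by have := count_sub_face_vertex j hok hm y; rewrite ltnNge h1 /= ltnNge h2.
by [].
Qed.

Lemma omega_edge_deg e : count (fun G => e \in face_edges G) (omega A).2 <= 2.
Proof.
rewrite count_omega; case: (leqP (A.1 + E) e.2) => h1.
  apply: leq_trans (leq_sumn_map
    (h := fun j => 2 * (j == (e.2 - A.1 - E) %/ 5)) _) (sumn_scale_eq _ _ _).
  move=> j /nth_face_iota [hm hok].
  by have := count_sub_face_edge j hok hm e; rewrite h1.
pose e' := nth (0, 0) (cedges A) (e.2 - A.1).
apply: leq_trans (leq_sumn_map
  (h := fun j => e' \in face_edges (nth [::] A.2 j) : nat) _) _.
  move=> j /nth_face_iota [hm hok].
  by have := count_sub_face_edge j hok hm e; rewrite ifF //; cedges_lia.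
rewrite (sumn_map_nth A.2 (fun F => e' \in face_edges F : nat)) sumn_count.
exact: wf_edge_deg.
Qed.

Lemma wf_omega : wf_cplx (omega A).
Proof.
split; [exact: omega_pentagon | exact: omega_faces_uniq |
        exact: omega_vertex_deg | exact: omega_edge_deg].
Qed.

End OmegaWellFormed.

Definition face_hom (A B : cplx) (f : nat -> nat) :=
  forall F, F \in A.2 -> map f F \in B.2.

Definition cplx_emb (A B : cplx) (f : nat -> nat) :=
  [/\ face_hom A B f, (forall x y, x < A.1 -> y < A.1 -> f x = f y -> x = y)
    & forall x, x < A.1 -> f x < B.1].

Lemma adj_face_hom A B f a b : face_hom A B f -> adj A a b -> adj B (f a) (f b).
Proof.
move=> hf /cedgesP [F hF he]; apply: (mem_cedges (hf F hF)).
by rewrite face_edges_map; apply/mapP; exists (uedge a b); rewrite ?uedge_map.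
Qed.

Lemma omega_map_old A B f x : x < A.1 -> omega_map A B f x = f x.
Proof. by rewrite /omega_map => ->. Qed.

Lemma omega_map_mid A B f a b : uedge a b \in cedges A ->
  omega_map A B f (mid A a b) = mid B (f a) (f b).
Proof.
move=> h; have /andP[h1 h2] := mid_range h.
rewrite /omega_map ifF; last by cedges_lia.
by rewrite ifT; [rewrite {1}/mid addKn nth_index // /mid uedge_map | cedges_lia].
Qed.

Lemma omega_map_ctr A B f j i : i < 5 ->
  omega_map A B f (ctr A j i) = ctr B (index (map f (nth [::] A.2 j)) B.2) i.
Proof.
move=> hi; rewrite /omega_map /ctr ifF; last by cedges_lia.
rewrite ifF; last by cedges_lia.
have -> : A.1 + size (cedges A) + 5 * j + i - A.1 - size (cedges A) = j * 5 + i
  by cedges_lia.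
by rewrite divnMDl // (divn_small hi) addn0 modnMDl (modn_small hi).
Qed.

Section OmegaMap.

Variables (A B : cplx) (f : nat -> nat).
Hypotheses (hA : wf_cplx A) (hf : cplx_emb A B f).

Lemma omega_map_sub_label j t : j < size A.2 -> t < 15 ->
  omega_map A B f (sub_label A j (nth [::] A.2 j) t) =
  sub_label B (index (map f (nth [::] A.2 j)) B.2) (map f (nth [::] A.2 j)) t.
Proof.
move=> hj ht; have [hm hok] := wf_nth_face hA hj.
set F := nth [::] A.2 j in hm hok *; have [hs _ _] := pentagonP hok.
case: (ltnP t 5) => h5.
  have [-> hr _] := sub_label_corner j hok h5.
  by rewrite omega_map_old // /sub_label h5 (nth_map 0) ?hs.
rewrite /sub_label ltnNge h5 /=.
case: (ltnP t 10) => h10; last by rewrite omega_map_ctr //; lia.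
have hin : uedge (nth 0 F (t - 5)) (nth 0 F ((t - 4) %% 5)) \in cedges A.
  have he := @nth_face_edges F (t - 5); rewrite hs in he.
  have -> : t - 4 = (t - 5).+1 by lia.
  by apply: (mem_cedges hm); rewrite -he; [apply: mem_nth; rewrite size_face_edges hs|]; lia.
by rewrite omega_map_mid // !(nth_map 0) ?hs ?ltn_pmod //; lia.
Qed.

Lemma omega_label_cases x : x < (omega A).1 ->
  [\/ x < A.1 /\ omega_map A B f x = f x,
      exists2 e, e \in cedges A &
        [/\ x = mid A e.1 e.2, omega_map A B f x = mid B (f e.1) (f e.2)
          & uedge (f e.1) (f e.2) \in cedges B]
    | exists j i, [/\ j < size A.2, i < 5, x = ctr A j i,
        omega_map A B f x = ctr B (index (map f (nth [::] A.2 j)) B.2) i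
        & index (map f (nth [::] A.2 j)) B.2 < size B.2]].
Proof.
have [hhom _ _] := hf; rewrite /omega /= => hx.
case: (ltnP x A.1) => h1; first by apply: Or31; rewrite omega_map_old.
case: (ltnP x (A.1 + size (cedges A))) => h2.
  apply: Or32; set e := nth (0, 0) (cedges A) (x - A.1).
  have he : e \in cedges A by apply: mem_nth; cedges_lia.
  have [ee _ _] := cedges_lt hA he.
  have hxm : x = mid A e.1 e.2 by rewrite /mid -ee index_uniq ?undup_uniq; cedges_lia.
  exists e => //; split => //; first by rewrite hxm omega_map_mid -?ee.
  by apply: (adj_face_hom hhom); rewrite /adj -ee.
apply: Or33; set k := x - A.1 - size (cedges A).
exists (k %/ 5), (k %% 5).
have hxc : x = ctr A (k %/ 5) (k %% 5) by rewrite /ctr (divn_eq k 5); cedges_lia.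
have hj : k %/ 5 < size A.2 by cedges_lia.
split => //; first by rewrite ltn_pmod.
  by rewrite {1}hxc omega_map_ctr // ltn_pmod.
by rewrite index_mem; apply/hhom/mem_nth.
Qed.

Lemma face_hom_omega : face_hom (omega A) (omega B) (omega_map A B f).
Proof.
have [hhom _ _] := hf.
move=> G /omega_facesP [j hj [T hT ->]].
set F := nth [::] A.2 j; set j' := index (map f F) B.2.
have hFB : map f F \in B.2 by apply/hhom/mem_nth.
have -> : map (omega_map A B f) (map (sub_label A j F) T) = map (sub_label B j' (map f F)) T.
  by rewrite -map_comp; apply/eq_in_map => t /(sub_tmpl_lt hT) ht /=; rewrite omega_map_sub_label.
apply/flattenP; exists (sub_face B j' (nth [::] B.2 j')).
  by apply: map_f; rewrite mem_iota index_mem.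
by rewrite nth_index // sub_faceE map_f.
Qed.

Lemma omega_map_lt x : x < (omega A).1 -> omega_map A B f x < (omega B).1.
Proof.
have [_ _ hlt] := hf; rewrite /omega /=.
case/omega_label_cases => [[hx ->]|[e _ [_ -> /mid_range]]|[j [i [_ hi _ -> hj]]]].
- by have := hlt _ hx; cedges_lia.
- by cedges_lia.
- by rewrite /ctr; cedges_lia.
Qed.

Lemma omega_map_inj x y : x < (omega A).1 -> y < (omega A).1 ->
  omega_map A B f x = omega_map A B f y -> x = y.
Proof.
have [hhom hinj hlt] := hf => hx hy.
case: (omega_label_cases hx) => [[x1 ->]|[e he [-> -> hce]]|[j [i [hj hi -> -> _]]]];
case: (omega_label_cases hy) => [[y1 ->]|[e' he' [-> -> hce']]|[j' [i' [hj' hi' -> -> _]]]].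
- exact: hinj.
- by have := hlt _ x1; have := mid_range hce'; cedges_lia.
- by have := hlt _ x1; rewrite /ctr; cedges_lia.
- by have := hlt _ y1; have := mid_range hce; cedges_lia.
- move/(mid_inj hce hce'); have [_ l1 l2] := cedges_lt hA he.
  have [_ l1' l2'] := cedges_lt hA he'.
  case/uedge_inj => [[a1 a2]|[a1 a2]].
    by rewrite (hinj _ _ l1 l1' a1) (hinj _ _ l2 l2' a2).
  by rewrite (hinj _ _ l1 l2' a1) (hinj _ _ l2 l1' a2) mid_sym.
- by have := mid_range hce; rewrite /ctr; cedges_lia.
- by have := hlt _ y1; rewrite /ctr; cedges_lia.
- by have := mid_range hce'; rewrite /ctr; cedges_lia.
rewrite /ctr => e; have -> : i = i' by cedges_lia.
have hFj := hhom _ (mem_nth [::] hj); have hFj' := hhom _ (mem_nth [::] hj').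
have /(congr1 (nth [::] B.2)) : index (map f (nth [::] A.2 j)) B.2 =
  index (map f (nth [::] A.2 j')) B.2 by cedges_lia.
rewrite !nth_index // => /(inj_in_map (A := fun x => x < A.1)) eF.
have : nth [::] A.2 j = nth [::] A.2 j'.
  have labels_lt k : k < size A.2 -> all (fun x => x < A.1) (nth [::] A.2 k).
    by move=> hk; apply/allP; have [_ _] := pentagonP (wf_pentagon hA (mem_nth [::] hk)).
  by apply: eF; rewrite ?inE ?labels_lt // => a b ha hb; apply: hinj.
by move/eqP; rewrite nth_uniq ?(wf_faces_uniq hA) // => /eqP ->.
Qed.

Lemma cplx_emb_omega : cplx_emb (omega A) (omega B) (omega_map A B f).
Proof. by split; [exact: face_hom_omega | exact: omega_map_inj | exact: omega_map_lt]. Qed.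

End OmegaMap.

Lemma wf_Kn n : wf_cplx (Kn n).
Proof.
elim: n => [|n IH]; last by rewrite /Kn iterS; apply: wf_omega.
split => //; first by move=> F; rewrite inE => /eqP ->.
- by move=> y /=; case: (y \in _).
- by move=> e /=; case: (e \in _).
Qed.

Lemma cplx_emb_emb n : cplx_emb (Kn n) (Kn n.+1) (emb n).
Proof.
elim: n => [|n IH].
  split; first by move=> F; rewrite inE => /eqP ->.
    by move=> x y _ _ /addnI.
  by move=> x /= hx; rewrite ltn_add2l.
exact: (cplx_emb_omega (wf_Kn n) IH).
Qed.

Lemma lift_add n k d v :
  Defs.lift n (k + d) v = Defs.lift (n + k) d (Defs.lift n k v).
Proof. by elim: d => [|d IH]; rewrite ?addn0 // addnS /= IH addnA. Qed.

Lemma lift_lt n k x : x < (Kn n).1 -> Defs.lift n k x < (Kn (n + k)).1.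
Proof.
elim: k => [|k IH] hx; first by rewrite addn0.
by rewrite addnS /=; case: (cplx_emb_emb (n + k)) => _ _; apply; apply: IH.
Qed.

Lemma lift_inj n k x y : x < (Kn n).1 -> y < (Kn n).1 ->
  Defs.lift n k x = Defs.lift n k y -> x = y.
Proof.
move=> hx hy; elim: k => [|k IH] //= e; apply: IH.
by case: (cplx_emb_emb (n + k)) => _ hinj _; apply: hinj e; apply: lift_lt.
Qed.

Lemma adj_lift n d a b : adj (Kn n) a b ->
  adj (Kn (n + d)) (Defs.lift n d a) (Defs.lift n d b).
Proof.
elim: d => [|d IH] h; first by rewrite addn0.
rewrite addnS /=; apply: (adj_face_hom (A := Kn (n + d))); last exact: IH.
by case: (cplx_emb_emb (n + d)).
Qed.

Lemma path_lift n d x s : path (adj (Kn n)) x s ->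
  path (adj (Kn (n + d))) (Defs.lift n d x) (map (Defs.lift n d) s).
Proof. by elim: s x => [|y s IH] x //= /andP[h1 h2]; rewrite adj_lift // IH. Qed.

Definition nbrs (K : cplx) y := flatten [seq F <- K.2 | y \in F].

Lemma size_nbrs K y : wf_cplx K -> size (nbrs K y) <= 20.
Proof.
move=> hK; rewrite /nbrs size_flatten /shape.
suff -> : sumn (map size [seq F <- K.2 | y \in F]) = 5 * count (fun F => y \in F) K.2.
  exact: (leq_mul (leqnn 5) (wf_vertex_deg hK y)).
rewrite -size_filter; have : {subset [seq F <- K.2 | y \in F] <= K.2}.
  by move=> F; rewrite mem_filter => /andP[].
elim: [seq F <- K.2 | y \in F] => [|F s IH] //= hs.
have [-> _ _] := pentagonP (wf_pentagon hK (hs F (mem_head _ _))).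
by rewrite IH ?mulnS // => G hG; apply: hs; rewrite inE hG orbT.
Qed.

Lemma adj_nbrs K y z : adj K y z -> z \in nbrs K y.
Proof.
case/cedgesP => F hF /face_edgesP [a [b [ha hb e]]].
by case: (uedge_inj e) => -[-> ->]; apply/flattenP; exists F; rewrite // mem_filter ?ha ?hb.
Qed.

Fixpoint ball (K : cplx) j x : seq nat :=
  if j is j'.+1 then ball K j' x ++ flatten (map (nbrs K) (ball K j' x)) else [:: x].

Lemma size_ball K j x : wf_cplx K -> size (ball K j x) <= 21 ^ j.
Proof.
move=> hK; elim: j => [|j IH] //=.
rewrite size_cat size_flatten /shape -map_comp expnS.
have : sumn (map (size \o nbrs K) (ball K j x)) <= 20 * size (ball K j x).
  by elim: (ball K j x) => [|z s IHs] //=; rewrite mulnS leq_add // size_nbrs.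
move/(leq_add (leqnn (size (ball K j x))))/leq_trans; apply.
by rewrite -mulSn leq_mul2l IH orbT.
Qed.

Lemma ball_mono K j k x : j <= k -> {subset ball K j x <= ball K k x}.
Proof.
move/subnKC <-; elim: (k - j) => [|d IH] z hz; first by rewrite addn0.
by rewrite addnS /= mem_cat IH.
Qed.

Lemma mem_ball_path K x s : path (adj K) x s -> last x s \in ball K (size s) x.
Proof.
elim/last_ind: s => [|s z IH] /=; first by rewrite inE.
rewrite rcons_path last_rcons size_rcons /= mem_cat => /andP[hp ha].
by apply/orP; right; apply/flattenP; exists (nbrs K (last x s)); [apply/map_f/IH | apply: adj_nbrs].
Qed.

Lemma exists_uniform_bound (T : eqType) (s : seq T) (Q : T -> nat -> Prop) :
  (forall v, v \in s -> exists k, Q v k) ->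
  exists K, forall v, v \in s -> exists2 k, k <= K & Q v k.
Proof.
elim: s => [|a s IH] hQ; first by exists 0.
have [ka hka] := hQ a (mem_head _ _).
have [K hK] : exists K, forall v, v \in s -> exists2 k, k <= K & Q v k.
  by apply: IH => v hv; apply: hQ; rewrite inE hv orbT.
exists (maxn ka K) => v; rewrite inE => /predU1P [->|hv].
  by exists ka; rewrite ?leq_maxl.
by have [k hk hq] := hK v hv; exists k; rewrite // (leq_trans hk) ?leq_maxr.
Qed.

Definition vertices (P : seq (seq nat)) := undup (flatten P).

Lemma patch_pentagon n P F : is_patch n P -> F \in P -> pentagon (Kn n).1 F.
Proof. by case=> _ [hs _] hF; apply/(wf_pentagon (wf_Kn n))/hs. Qed.

Lemma patch_size_vertices n P r : is_patch n P -> Kdiam_lt n P r ->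
  size (vertices P) <= 21 ^ r.
Proof.
move=> hP hD; have [hne _] := hP.
have [F0 hF0] : exists F0, F0 \in P.
  by case: P hne {hP hD} => // F0 P _; exists F0; rewrite mem_head.
have [hs0 _ _] := pentagonP (patch_pentagon hP hF0).
set u := nth 0 F0 0.
have hu : u \in flatten P by apply/flattenP; exists F0; rewrite // mem_nth ?hs0.
have [K hK] := exists_uniform_bound (s := flatten P)
  (Q := fun v k => exists s, path (adj (Kn (n + k))) (Defs.lift n k u) s /\
                     last (Defs.lift n k u) s = Defs.lift n k v /\ size s < r)
  (fun v => hD u v hu).
have in_ball v : v \in flatten P ->
    Defs.lift n K v \in ball (Kn (n + K)) r (Defs.lift n K u).
  move=> hv; have [k hk [s [hp [hl hs]]]] := hK v hv.
  have := mem_ball_path (path_lift (K - k) hp).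
  rewrite last_map hl -!lift_add -addnA !subnKC // size_map.
  by apply: ball_mono; apply: ltnW.
have hlt v : v \in vertices P -> v < (Kn n).1.
  rewrite mem_undup => /flattenP [F hF hv].
  by have [_ _] := pentagonP (patch_pentagon hP hF); apply.
rewrite -(size_map (Defs.lift n K)); apply: leq_trans (size_ball _ _ (wf_Kn _)).
apply: uniq_leq_size; last by move=> _ /mapP [v hv ->]; apply: in_ball; rewrite -mem_undup.
rewrite map_inj_in_uniq ?undup_uniq // => x y hx hy.
by apply: lift_inj; apply: hlt.
Qed.

Lemma patch_face_size n P : is_patch n P -> {in P, forall F, size F = 5}.
Proof. by move=> hP F /(patch_pentagon hP) /pentagonP []. Qed.

Fixpoint sublists (T : Type) (s : seq T) : seq (seq T) :=
  if s is x :: t then sublists t ++ map (cons x) (sublists t) else [:: [::]].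

Lemma filter_sublists (T : eqType) (p : pred T) s : filter p s \in sublists s.
Proof. by elim: s => [|x s IH] //=; case: (p x); rewrite mem_cat ?IH ?map_f ?orbT. Qed.

Fixpoint words (k m : nat) : seq (seq nat) :=
  if k is k'.+1 then [seq x :: w | x <- iota 0 m, w <- words k' m]
  else [:: [::]].

Lemma mem_words k m w : size w = k -> all (fun x => x < m) w -> w \in words k m.
Proof.
elim: k w => [|k IH] [|x w] //= [hs] /andP[hx hw].
by rewrite allpairs_f ?mem_iota ?IH.
Qed.

Definition vindex (P : seq (seq nat)) x := index x (vertices P).

Definition canon (P : seq (seq nat)) := map (map (vindex P)) P.

(* Filtering the fixed enumeration [words] makes the key independent of the
   order in which the faces of [P] are listed. *)
Definition shape_key (P : seq (seq nat)) : nat * seq (seq nat) :=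
  (size (vertices P), filter (mem (canon P)) (words 5 (size (vertices P)))).

Definition shape_keys B : seq (nat * seq (seq nat)) :=
  [seq (m, Fs) | m <- iota 0 B.+1, Fs <- sublists (words 5 m)].

Lemma canon_words P : {in P, forall F, size F = 5} ->
  {subset canon P <= words 5 (size (vertices P))}.
Proof.
move=> h5 _ /mapP [F hF ->]; rewrite mem_words ?size_map ?(h5 F hF) //.
apply/allP => _ /mapP [x hx ->]; rewrite /vindex index_mem mem_undup.
by apply/flattenP; exists F.
Qed.

Lemma shape_key_canon P : {in P, forall F, size F = 5} -> (shape_key P).2 =i canon P.
Proof.
move=> h5 T; rewrite mem_filter /=.
by case hT: (T \in canon P); rewrite // (canon_words h5 hT).
Qed.

Lemma shape_key_in B P : size (vertices P) <= B -> shape_key P \in shape_keys B.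
Proof.
move=> hB; pose pair (m : nat) (Fs : seq (seq nat)) := (m, Fs).
by rewrite (allpairs_f_dep pair) ?mem_iota ?filter_sublists.
Qed.

Lemma nth_vindex P G : {subset G <= flatten P} ->
  map (nth 0 (vertices P)) (map (vindex P) G) = G.
Proof.
move=> hG; rewrite -map_comp -[RHS]map_id; apply/eq_in_map => x hx /=.
by rewrite /vindex nth_index // mem_undup hG.
Qed.

Lemma dih_eq_refl (G : seq nat) : 0 < size G -> dih_eq G G.
Proof. by move=> hG; apply/hasP; exists 0; rewrite ?mem_iota ?rot0 ?eqxx. Qed.

Lemma iso_of_shape_key P Q :
  {in P, forall F, size F = 5} -> {in Q, forall F, size F = 5} ->
  shape_key P = shape_key Q -> patch_iso P Q.
Proof.
move=> h5P h5Q e; have [esz _] := e.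
have ecanon : canon P =i canon Q.
  by move=> T; rewrite -shape_key_canon // e shape_key_canon.
pose phi x := nth 0 (vertices Q) (vindex P x).
have phi_face F G : G \in Q -> map (vindex P) F = map (vindex Q) G -> dih_eq (map phi F) G.
  move=> hG eFG; rewrite (map_comp (nth 0 _) (vindex P)) eFG nth_vindex.
    by rewrite dih_eq_refl ?h5Q.
  by move=> x hx; apply/flattenP; exists G.
exists phi; split; [|split].
- have vindex_lt x : x \in flatten P -> vindex P x < size (vertices Q).
    by rewrite -esz /vindex index_mem mem_undup.
  move=> x y hx hy /eqP; rewrite nth_uniq ?undup_uniq ?vindex_lt //.
  by move/eqP/(congr1 (nth 0 (vertices P))); rewrite /vindex !nth_index ?mem_undup.
- move=> F hF; have : map (vindex P) F \in canon Q by rewrite -ecanon map_f.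
  by case/mapP => G hG eFG; exists G; last exact: phi_face.
- move=> G hG; have : map (vindex Q) G \in canon P by rewrite ecanon map_f.
  by case/mapP => F hF eFG; exists F; last exact: phi_face.
Qed.

Lemma choose_representatives (T K : eqType) (good : T -> Prop) (key : T -> K)
    (keys : seq K) :
  exists L : seq T, (forall p, p \in L -> good p) /\
    forall p, good p -> key p \in keys -> exists2 q, q \in L & key q = key p.
Proof.
elim: keys => [|k keys [L [hL hrep]]]; first by exists [::].
have [[q [gq eq]]|hnone] := classic (exists q, good q /\ key q = k).
  exists (q :: L); split => [p /predU1P [->|/hL]|p gp] //.
  rewrite inE => /predU1P [->|/(hrep p gp) [q' hq' e]]; first by exists q; rewrite ?mem_head.
  by exists q'; rewrite // inE hq' orbT.
exists L; split => // p gp; rewrite inE => /predU1P [ek|]; last exact: hrep.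
by case: hnone; exists p.
Qed.

Theorem theoremt :
  forall r : nat, 0 < r ->
  exists L : seq (nat * seq (seq nat)),
    (forall p, p \in L -> is_patch p.1 p.2 /\ Kdiam_lt p.1 p.2 r) /\
    (forall (n : nat) (P : seq (seq nat)),
        is_patch n P -> Kdiam_lt n P r ->
        exists2 p, p \in L & patch_iso P p.2).
Proof.
move=> r _.
have [L [hL hrep]] := choose_representatives
  (fun p => is_patch p.1 p.2 /\ Kdiam_lt p.1 p.2 r) (fun p => shape_key p.2)
  (shape_keys (21 ^ r)).
exists L; split => // n P hP hD.
have [q hq ekey] := hrep (n, P) (conj hP hD) (shape_key_in (patch_size_vertices hP hD)).
exists q => //; have [hq1 _] := hL q hq.
exact: iso_of_shape_key (patch_face_size hP) (patch_face_size hq1) (esym ekey).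
Qed.
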